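(* Let $w :: \bar v, \bar\sigma \Rightarrow \bar\rho, \bar\kappa$ be a raw match derivation. Then $\mathrm{bwd}_w : \mathrm{Sel}(\bar\rho)\times\mathrm{Sel}(\bar\kappa)\times\mathbb{A} \to \mathrm{Sel}(\bar v)\times\mathrm{Sel}(\bar\sigma)$ and $\mathrm{fwd}_w : \mathrm{Sel}(\bar v)\times\mathrm{Sel}(\bar\sigma)\to\mathrm{Sel}(\bar\rho)\times\mathrm{Sel}(\bar\kappa)\times\mathbb{A}$ form a Galois connection with $\mathrm{bwd}_w$ the lower adjoint: both are monotone, and for all $(\rho,\kappa,\alpha)$ and all $(v,\sigma)$ we have $\mathrm{fwd}_w(\mathrm{bwd}_w(\rho,\kappa,\alpha)) \ge (\rho,\kappa,\alpha)$ and $\mathrm{bwd}_w(\mathrm{fwd}_w(v,\sigma)) \le (v,\sigma)$.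
   Context: Fix a bounded lattice $(\mathbb{A},\le,\top,\bot,\sqcap,\sqcup)$ of ''selection states''. Raw values are $\bar v ::= \mathsf{true}\mid\mathsf{false}\mid n \mid [\,] \mid (\bar u : \bar v) \mid \langle x_1:\bar v_1,\dots,x_k:\bar v_k\rangle \mid$ closures. A selection of a raw value $\bar v$ is the same tree with an element of $\mathbb{A}$ attached to every Boolean, integer, nil, cons and record node (closures carry selections on their components), written $\mathsf{true}_\alpha$, $\mathsf{false}_\alpha$, $n_\alpha$, $[\,]_\alpha$, $(u :_\alpha v)$, $\langle x_1:v_1,\dots,x_k:v_k\rangle_\alpha$. $\mathrm{Sel}(\bar v)$ denotes the set of selections of shape $\bar v$, ordered pointwise; it is a bounded lattice. Likewise for every raw term, eliminator, continuation or environment $\bar X$, $\mathrm{Sel}(\bar X)$ is the pointwise-ordered lattice of its selections; $\bot$ also denotes the least selection of a given raw object. Environments are finite sequences $\rho = x_1:v_1,\dots,x_k:v_k$ with concatenation $\cdot$ and empty environment $\varepsilon$; selections of an environment are pointwise. Products of lattices are ordered componentwise. Eliminators: $\sigma ::= (x\mapsto\kappa) \mid \{\mathsf{true}\mapsto\kappa,\ \mathsf{false}\mapsto\kappa'\} \mid \{\langle x_1,\dots,x_k\rangle\mapsto\kappa\}\ (k\ge 0) \mid \{[\,]\mapsto\kappa,\ (:)\mapsto\sigma'\}$, where a continuation $\kappa$ is either a term or an eliminator. Eliminators carry no selection states of their own; a selection of an eliminator is a selection of each of its component continuations. Raw match derivations $w :: \bar v, \bar\sigma \Rightarrow \bar\rho,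 \bar\kappa$ are generated by: (var) $x :: \bar v, (x\mapsto\bar\kappa) \Rightarrow (x:\bar v), \bar\kappa$; (true) $\mathsf{true} :: \mathsf{true}, \{\mathsf{true}\mapsto\bar\kappa,\mathsf{false}\mapsto\bar\kappa'\} \Rightarrow \varepsilon, \bar\kappa$; (false) analogously yielding $\varepsilon,\bar\kappa'$; (nil) $[\,] :: [\,], \{[\,]\mapsto\bar\kappa,(:)\mapsto\bar\sigma\} \Rightarrow \varepsilon,\bar\kappa$; (cons) if $w_1 :: \bar v_1,\bar\sigma_1 \Rightarrow \bar\rho_1,\bar\tau$ and $w_2 :: \bar v_2,\bar\tau \Rightarrow \bar\rho_2,\bar\kappa$ then $(w_1:w_2) :: (\bar v_1:\bar v_2), \{[\,]\mapsto\bar\kappa_0,(:)\mapsto\bar\sigma_1\} \Rightarrow \bar\rho_1\cdot\bar\rho_2,\bar\kappa$; (unit) $\langle\rangle :: \langle\rangle, \{\langle\rangle\mapsto\bar\kappa\}\Rightarrow\varepsilon,\bar\kappa$; (record, $k\ge1$) if $w' :: \langle x_1:\bar v_1,\dots,x_{k-1}:\bar v_{k-1}\rangle, \{\langle x_1,\dots,x_{k-1}\rangle\mapsto\bar\kappa_0\} \Rightarrow \bar\rho,\bar\sigma'$ with $w' = \langle x_1:w_1,\dots,x_{k-1}:w_{k-1}\rangle$ and $w_k :: \bar v_k,\bar\sigma'\Rightarrow\bar\rho',\bar\kappa$, then $\langle x_1:w_1,\dots,x_k:w_k\rangle :: \langle x_1:\bar v_1,\dots,x_k:\bar v_k\rangle,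 \{\langle x_1,\dots,x_k\rangle\mapsto\bar\kappa_0\} \Rightarrow \bar\rho\cdot\bar\rho',\bar\kappa$. Forward match $\mathrm{fwd}_w$ is defined by recursion on $w$: (var) $\mathrm{fwd}(v, x\mapsto\kappa) = (x:v,\kappa,\top)$; (true) $\mathrm{fwd}(\mathsf{true}_\alpha,\{\mathsf{true}\mapsto\kappa,\mathsf{false}\mapsto\kappa'\}) = (\varepsilon,\kappa,\alpha)$; (false) $\mathrm{fwd}(\mathsf{false}_\alpha,\{\mathsf{true}\mapsto\kappa,\mathsf{false}\mapsto\kappa'\})=(\varepsilon,\kappa',\alpha)$; (nil) $\mathrm{fwd}([\,]_\alpha,\{[\,]\mapsto\kappa,(:)\mapsto\sigma'\})=(\varepsilon,\kappa,\alpha)$; (cons) if $\mathrm{fwd}_{w_1}(v_1,\sigma_1)=(\rho_1,\tau,\beta)$ and $\mathrm{fwd}_{w_2}(v_2,\tau)=(\rho_2,\kappa,\beta')$ then $\mathrm{fwd}_{w_1:w_2}((v_1:_\alpha v_2),\{[\,]\mapsto\kappa_0,(:)\mapsto\sigma_1\}) = (\rho_1\cdot\rho_2,\kappa,\alpha\sqcap\beta\sqcap\beta')$; (unit) $\mathrm{fwd}(\langle\rangle_\alpha,\{\langle\rangle\mapsto\kappa\}) = (\varepsilon,\kappa,\alpha)$; (record, $k\ge1$) if $\mathrm{fwd}_{w'}(\langle x_1:v_1,\dots,x_{k-1}:v_{k-1}\rangle_\top, \{\langle x_1,\dots,x_{k-1}\rangle\mapsto\kappa_0\}) = (\rho,\sigma',\beta)$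 and $\mathrm{fwd}_{w_k}(v_k,\sigma') = (\rho',\kappa,\beta')$ then $\mathrm{fwd}(\langle x_1:v_1,\dots,x_k:v_k\rangle_\alpha, \{\langle x_1,\dots,x_k\rangle\mapsto\kappa_0\}) = (\rho\cdot\rho',\kappa,\alpha\sqcap\beta\sqcap\beta')$. Backward match $\mathrm{bwd}_w$ is defined by recursion on $w$ (below $\bot$ is the least selection of the raw continuation of the untaken branch in $\bar\sigma$, and an environment selection in $\mathrm{Sel}(\bar\rho_1\cdot\bar\rho_2)$ is split uniquely as $\rho_1\cdot\rho_2$ with $\rho_i\in\mathrm{Sel}(\bar\rho_i)$): (var) $\mathrm{bwd}(x:v,\kappa,\alpha) = (v, x\mapsto\kappa)$; (true) $\mathrm{bwd}(\varepsilon,\kappa,\alpha) = (\mathsf{true}_\alpha,\{\mathsf{true}\mapsto\kappa,\mathsf{false}\mapsto\bot\})$; (false) $\mathrm{bwd}(\varepsilon,\kappa,\alpha) = (\mathsf{false}_\alpha,\{\mathsf{true}\mapsto\bot,\mathsf{false}\mapsto\kappa\})$; (nil) $\mathrm{bwd}(\varepsilon,\kappa,\alpha) = ([\,]_\alpha,\{[\,]\mapsto\kappa,(:)\mapsto\bot\})$; (cons) if $\mathrm{bwd}_{w_2}(\rho_2,\kappa,\alpha) = (v_2,\tau)$ and $\mathrm{bwd}_{w_1}(\rho_1,\tau,\alpha) = (v_1,\sigma_1)$ then $\mathrm{bwd}_{w_1:w_2}(\rho_1\cdot\rho_2,\kappa,\alpha) = ((v_1:_\alpha v_2),\{[\,]\mapsto\bot,(:)\mapsto\sigma_1\})$;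 (unit) $\mathrm{bwd}(\varepsilon,\kappa,\alpha) = (\langle\rangle_\alpha,\{\langle\rangle\mapsto\kappa\})$; (record, $k\ge 1$) if $\mathrm{bwd}_{w_k}(\rho_2,\kappa,\alpha) = (v_k,\sigma')$ and $\mathrm{bwd}_{w'}(\rho_1,\sigma',\alpha) = (\langle x_1:v_1,\dots,x_{k-1}:v_{k-1}\rangle_\beta, \{\langle x_1,\dots,x_{k-1}\rangle\mapsto\kappa_0\})$ then $\mathrm{bwd}(\rho_1\cdot\rho_2,\kappa,\alpha) = (\langle x_1:v_1,\dots,x_k:v_k\rangle_\alpha, \{\langle x_1,\dots,x_k\rangle\mapsto\kappa_0\})$. *)

From HB Require Import structures.
From mathcomp Require Import all_boot all_order ssralg ssrint.
Set Implicit Arguments. Unset Strict Implicit. Unset Printing Implicit Defensive.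
Import Order.TTheory.

Definition var := nat.

(* Syntax parametrised by the type [A] of selection states attached to nodes.
   Raw objects are those with [A := unit]; a selection of a raw object [X] is an
   [A]-annotated object whose erasure (map to [tt]) is [X]. *)
Inductive term (A : Type) :=
| TVar of var
| TInt of int & A
| TTrue of A
| TFalse of A
| TNil of A
| TCons of A & term A & term A
| TRec of A & seq (var * term A)
| TProj of term A & var
| TApp of term A & term A
| TLam of elim A
| TLet of term A & elim A
| TLetRec of seq (var * elim A) & term A
with elim (A : Type) :=
| EVar of var & cont A
| EBool of cont A & cont A             (* {true |-> kappa, false |-> kappa'} *)
| ERec of seq var & cont A
| EList of cont A & elim A             (* {[] |-> kappa, (:) |-> sigma'} *)
with cont (A : Type) :=
| CTerm of term A
| CElim of elim A.

Inductive value (A : Type) :=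
| VTrue of A
| VFalse of A
| VInt of int & A
| VNil of A
| VCons of A & value A & value A
| VRec of A & seq (var * value A)
| VClos of seq (var * value A) & seq (var * elim A) & elim A.

Arguments TVar {A}. Arguments TInt {A}. Arguments TTrue {A}. Arguments TFalse {A}.
Arguments TNil {A}. Arguments TCons {A}. Arguments TRec {A}. Arguments TProj {A}.
Arguments TApp {A}. Arguments TLam {A}. Arguments TLet {A}. Arguments TLetRec {A}.
Arguments EVar {A}. Arguments EBool {A}. Arguments ERec {A}. Arguments EList {A}.
Arguments CTerm {A}. Arguments CElim {A}.
Arguments VTrue {A}. Arguments VFalse {A}. Arguments VInt {A}. Arguments VNil {A}.
Arguments VCons {A}. Arguments VRec {A}. Arguments VClos {A}.

Definition env (A : Type) := seq (var * value A).

Definition map_fields {T U : Type} (f : T -> U) (l : seq (var * T)) : seq (var * U) :=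
  map (fun p => (p.1, f p.2)) l.

Fixpoint map_term {A B : Type} (f : A -> B) (t : term A) {struct t} : term B :=
  match t with
  | TVar x => TVar x
  | TInt n a => TInt n (f a)
  | TTrue a => TTrue (f a)
  | TFalse a => TFalse (f a)
  | TNil a => TNil (f a)
  | TCons a e1 e2 => TCons (f a) (map_term f e1) (map_term f e2)
  | TRec a fs => TRec (f a) (map_fields (map_term f) fs)
  | TProj e x => TProj (map_term f e) x
  | TApp e1 e2 => TApp (map_term f e1) (map_term f e2)
  | TLam s => TLam (map_elim f s)
  | TLet e s => TLet (map_term f e) (map_elim f s)
  | TLetRec h e => TLetRec (map_fields (map_elim f) h) (map_term f e)
  end
with map_elim {A B : Type} (f : A -> B) (s : elim A) {struct s} : elim B :=
  match s with
  | EVar x k => EVar x (map_cont f k)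
  | EBool k k' => EBool (map_cont f k) (map_cont f k')
  | ERec xs k => ERec xs (map_cont f k)
  | EList k s' => EList (map_cont f k) (map_elim f s')
  end
with map_cont {A B : Type} (f : A -> B) (k : cont A) {struct k} : cont B :=
  match k with
  | CTerm e => CTerm (map_term f e)
  | CElim s => CElim (map_elim f s)
  end.

Fixpoint map_val {A B : Type} (f : A -> B) (v : value A) {struct v} : value B :=
  match v with
  | VTrue a => VTrue (f a)
  | VFalse a => VFalse (f a)
  | VInt n a => VInt n (f a)
  | VNil a => VNil (f a)
  | VCons a v1 v2 => VCons (f a) (map_val f v1) (map_val f v2)
  | VRec a fs => VRec (f a) (map_fields (map_val f) fs)
  | VClos r h s => VClos (map_fields (map_val f) r) (map_fields (map_elim f) h) (map_elim f s)
  end.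

Definition map_env {A B : Type} (f : A -> B) (r : env A) : env B :=
  map_fields (map_val f) r.

Definition rel_fields {T U : Type} (R : T -> U -> Prop) :=
  fix go (l : seq (var * T)) (l' : seq (var * U)) {struct l} : Prop :=
    match l, l' with
    | [::], [::] => True
    | (x, a) :: l1, (y, b) :: l1' => x = y /\ R a b /\ go l1 l1'
    | _, _ => False
    end.

Fixpoint rel_term {A : Type} (R : A -> A -> Prop) (t t' : term A) {struct t} : Prop :=
  match t, t' with
  | TVar x, TVar y => x = y
  | TInt n a, TInt m b => n = m /\ R a b
  | TTrue a, TTrue b => R a b
  | TFalse a, TFalse b => R a b
  | TNil a, TNil b => R a b
  | TCons a e1 e2, TCons b e1' e2' => R a b /\ rel_term R e1 e1' /\ rel_term R e2 e2'
  | TRec a fs, TRec b gs => R a b /\ rel_fields (rel_term R) fs gs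
  | TProj e x, TProj e' y => rel_term R e e' /\ x = y
  | TApp e1 e2, TApp e1' e2' => rel_term R e1 e1' /\ rel_term R e2 e2'
  | TLam s, TLam s' => rel_elim R s s'
  | TLet e s, TLet e' s' => rel_term R e e' /\ rel_elim R s s'
  | TLetRec h e, TLetRec h' e' => rel_fields (rel_elim R) h h' /\ rel_term R e e'
  | _, _ => False
  end
with rel_elim {A : Type} (R : A -> A -> Prop) (s s' : elim A) {struct s} : Prop :=
  match s, s' with
  | EVar x k, EVar y k' => x = y /\ rel_cont R k k'
  | EBool k1 k2, EBool k1' k2' => rel_cont R k1 k1' /\ rel_cont R k2 k2'
  | ERec xs k, ERec ys k' => xs = ys /\ rel_cont R k k'
  | EList k s1, EList k' s1' => rel_cont R k k' /\ rel_elim R s1 s1'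
  | _, _ => False
  end
with rel_cont {A : Type} (R : A -> A -> Prop) (k k' : cont A) {struct k} : Prop :=
  match k, k' with
  | CTerm e, CTerm e' => rel_term R e e'
  | CElim s, CElim s' => rel_elim R s s'
  | _, _ => False
  end.

Fixpoint rel_val {A : Type} (R : A -> A -> Prop) (v v' : value A) {struct v} : Prop :=
  match v, v' with
  | VTrue a, VTrue b => R a b
  | VFalse a, VFalse b => R a b
  | VInt n a, VInt m b => n = m /\ R a b
  | VNil a, VNil b => R a b
  | VCons a v1 v2, VCons b v1' v2' => R a b /\ rel_val R v1 v1' /\ rel_val R v2 v2'
  | VRec a fs, VRec b gs => R a b /\ rel_fields (rel_val R) fs gs
  | VClos r h s, VClos r' h' s' =>
      rel_fields (rel_val R) r r' /\ rel_fields (rel_elim R) h h' /\ rel_elim R s s'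
  | _, _ => False
  end.

Definition rel_env {A : Type} (R : A -> A -> Prop) (r r' : env A) : Prop :=
  rel_fields (rel_val R) r r'.

Inductive mderiv : value unit -> elim unit -> env unit -> cont unit -> Type :=
| MVar (x : var) (v : value unit) (k : cont unit) :
    mderiv v (EVar x k) [:: (x, v)] k
| MTrue (k k' : cont unit) : mderiv (VTrue tt) (EBool k k') [::] k
| MFalse (k k' : cont unit) : mderiv (VFalse tt) (EBool k k') [::] k'
| MNil (k : cont unit) (s : elim unit) : mderiv (VNil tt) (EList k s) [::] k
| MCons (v1 v2 : value unit) (k0 : cont unit) (s1 : elim unit) (r1 : env unit)
        (t : elim unit) (r2 : env unit) (k : cont unit) :
    mderiv v1 s1 r1 (CElim t) -> mderiv v2 t r2 k ->
    mderiv (VCons tt v1 v2) (EList k0 s1) (r1 ++ r2) k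
| MUnit (k : cont unit) : mderiv (VRec tt [::]) (ERec [::] k) [::] k
| MRec (fs : seq (var * value unit)) (x : var) (v : value unit) (k0 : cont unit)
       (r : env unit) (s' : elim unit) (r' : env unit) (k : cont unit) :
    mderiv (VRec tt fs) (ERec (map fst fs) k0) r (CElim s') ->
    mderiv v s' r' k ->
    mderiv (VRec tt (rcons fs (x, v))) (ERec (rcons (map fst fs) x) k0) (r ++ r') k.

Section Slicing.
Local Open Scope order_scope.
Context {d : Order.disp_t} {A : tbLatticeType d}.

Definition erase_tt : A -> unit := fun _ => tt.
Definition sel_val (v : value A) (vb : value unit) : Prop := map_val erase_tt v = vb.
Definition sel_elim (s : elim A) (sb : elim unit) : Prop := map_elim erase_tt s = sb.
Definition sel_cont (k : cont A) (kb : cont unit) : Prop := map_cont erase_tt k = kb.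
Definition sel_env (r : env A) (rb : env unit) : Prop := map_env erase_tt r = rb.

Definition bot_fn : unit -> A := fun _ => \bot.
Definition bot_val (vb : value unit) : value A := map_val bot_fn vb.
Definition bot_elim (sb : elim unit) : elim A := map_elim bot_fn sb.
Definition bot_cont (kb : cont unit) : cont A := map_cont bot_fn kb.
Definition bot_env (rb : env unit) : env A := map_env bot_fn rb.

Definition leA (a b : A) : Prop := a <= b.
Definition le_val := rel_val leA.
Definition le_elim := rel_elim leA.
Definition le_cont := rel_cont leA.
Definition le_env := rel_env leA.
Definition le_out3 (x y : env A * cont A * A) : Prop :=
  [/\ le_env x.1.1 y.1.1, le_cont x.1.2 y.1.2 & x.2 <= y.2].
Definition le_out2 (x y : value A * elim A) : Prop :=
  le_val x.1 y.1 /\ le_elim x.2 y.2.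

(* Forward match; the default branches are unreachable on selections of the
   right shape. *)
Fixpoint fwd {vb sb rb kb} (w : mderiv vb sb rb kb) (v : value A) (s : elim A)
  {struct w} : env A * cont A * A :=
  let dflt := (bot_env rb, bot_cont kb, \bot) in
  match w with
  | MVar x _ _ => match s with EVar _ k => ([:: (x, v)], k, \top) | _ => dflt end
  | MTrue _ _ => match v, s with VTrue a, EBool k _ => ([::], k, a) | _, _ => dflt end
  | MFalse _ _ => match v, s with VFalse a, EBool _ k' => ([::], k', a) | _, _ => dflt end
  | MNil _ _ => match v, s with VNil a, EList k _ => ([::], k, a) | _, _ => dflt end
  | MCons _ _ _ _ _ _ _ _ w1 w2 =>
      match v, s with
      | VCons a v1 v2, EList _ s1 =>
          let '(r1, t, b) := fwd w1 v1 s1 in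
          match t with
          | CElim tau => let '(r2, k, b') := fwd w2 v2 tau in (r1 ++ r2, k, a `&` b `&` b')
          | _ => dflt
          end
      | _, _ => dflt
      end
  | MUnit _ => match v, s with VRec a _, ERec _ k => ([::], k, a) | _, _ => dflt end
  | MRec fs _ _ _ _ _ _ _ w' wk =>
      match v, s with
      | VRec a fsel, ERec _ k0 =>
          match rev fsel with
          | (_, vk) :: rinit =>
              let '(r, t, b) := fwd w' (VRec \top (rev rinit)) (ERec (map fst fs) k0) in
              match t with
              | CElim s' => let '(r', k, b') := fwd wk vk s' in (r ++ r', k, a `&` b `&` b')
              | _ => dflt
              end
          | [::] => dflt
          end
      | _, _ => dflt
      end
  end.

(* Backward match; an environment selection of rho1 . rho2 is split according
   to the length of the raw rho1. *)
Fixpoint bwd {vb sb rb kb} (w : mderiv vb sb rb kb) (r : env A) (k : cont A) (a : A)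
  {struct w} : value A * elim A :=
  let dflt := (bot_val vb, bot_elim sb) in
  match w with
  | MVar x _ _ => match r with [:: (_, v)] => (v, EVar x k) | _ => dflt end
  | MTrue _ k' => (VTrue a, EBool k (bot_cont k'))
  | MFalse k0 _ => (VFalse a, EBool (bot_cont k0) k)
  | MNil _ s => (VNil a, EList k (bot_elim s))
  | MCons _ _ k0 _ r1 _ _ _ w1 w2 =>
      let '(v2, tau) := bwd w2 (drop (size r1) r) k a in
      let '(v1, s1) := bwd w1 (take (size r1) r) (CElim tau) a in
      (VCons a v1 v2, EList (bot_cont k0) s1)
  | MUnit _ => (VRec a [::], ERec [::] k)
  | MRec fs x _ _ r0 _ _ _ w' wk =>
      let '(vk, s') := bwd wk (drop (size r0) r) k a in
      match bwd w' (take (size r0) r) (CElim s') a with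
      | (VRec _ fsel, ERec _ k0) =>
          (VRec a (rcons fsel (x, vk)), ERec (rcons (map fst fs) x) k0)
      | _ => dflt
      end
  end.

End Slicing.

(* The proof is by induction on w, carrying all six clauses at once (record
   [galois_match]): shape preservation, monotonicity, and the unit and counit
   inequalities.
   The cons rule and the record rule are both "sequential composition": a first
   match produces an eliminator that is handed to a second match, environments
   are concatenated and annotations are met.  This common core ([fwd_seq],
   [bwd_seq]) is proved once to inherit the six clauses from its two parts; the
   two compound rules are then thin wrappers around it. *)
From HB Require Import structures.
From mathcomp Require Import all_boot all_order ssralg ssrint.
Import Order.TTheory.
Local Open Scope order_scope.

(* [allf P fs]: every entry of the field list [fs] satisfies [P]; this is the
   shape of the induction hypothesis at record, closure and letrec nodes. *)
Fixpoint allf {T : Type} (P : T -> Prop) (fs : seq (var * T)) : Prop :=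
  match fs with [::] => True | f :: fs' => P f.2 /\ allf P fs' end.

Fixpoint allf_of {T : Type} {P : T -> Prop} (h : forall e, P e)
    (fs : seq (var * T)) : allf P fs :=
  match fs return allf P fs with
  | [::] => I
  | (_, e) :: fs' => conj (h e) (allf_of h fs')
  end.

Section SyntaxInduction.
Variable B : Type.
Variables (P : term B -> Prop) (Q : elim B -> Prop) (C : cont B -> Prop).
Hypotheses
  (hVar : forall x, P (TVar x))
  (hInt : forall n a, P (TInt n a))
  (hTrue : forall a, P (TTrue a))
  (hFalse : forall a, P (TFalse a))
  (hNil : forall a, P (TNil a))
  (hCons : forall a e1 e2, P e1 -> P e2 -> P (TCons a e1 e2))
  (hRec : forall a fs, allf P fs -> P (TRec a fs))
  (hProj : forall e x, P e -> P (TProj e x))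
  (hApp : forall e1 e2, P e1 -> P e2 -> P (TApp e1 e2))
  (hLam : forall s, Q s -> P (TLam s))
  (hLet : forall e s, P e -> Q s -> P (TLet e s))
  (hLetRec : forall h e, allf Q h -> P e -> P (TLetRec h e))
  (hEVar : forall x k, C k -> Q (EVar x k))
  (hEBool : forall k k', C k -> C k' -> Q (EBool k k'))
  (hERec : forall xs k, C k -> Q (ERec xs k))
  (hEList : forall k s, C k -> Q s -> Q (EList k s))
  (hCTerm : forall e, P e -> C (CTerm e))
  (hCElim : forall s, Q s -> C (CElim s)).

Fixpoint term_nested_ind (t : term B) : P t :=
  match t with
  | TVar x => hVar x
  | TInt n a => hInt n a
  | TTrue a => hTrue a
  | TFalse a => hFalse a
  | TNil a => hNil a
  | TCons a e1 e2 => hCons a e1 e2 (term_nested_ind e1) (term_nested_ind e2)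
  | TRec a fs => hRec a fs (allf_of term_nested_ind fs)
  | TProj e x => hProj e x (term_nested_ind e)
  | TApp e1 e2 => hApp e1 e2 (term_nested_ind e1) (term_nested_ind e2)
  | TLam s => hLam s (elim_nested_ind s)
  | TLet e s => hLet e s (term_nested_ind e) (elim_nested_ind s)
  | TLetRec h e => hLetRec h e (allf_of elim_nested_ind h) (term_nested_ind e)
  end
with elim_nested_ind (s : elim B) : Q s :=
  match s with
  | EVar x k => hEVar x k (cont_nested_ind k)
  | EBool k k' => hEBool k k' (cont_nested_ind k) (cont_nested_ind k')
  | ERec xs k => hERec xs k (cont_nested_ind k)
  | EList k s' => hEList k s' (cont_nested_ind k) (elim_nested_ind s')
  end
with cont_nested_ind (k : cont B) : C k :=
  match k with
  | CTerm e => hCTerm e (term_nested_ind e)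
  | CElim s => hCElim s (elim_nested_ind s)
  end.

Lemma syntax_ind : (forall t, P t) /\ (forall s, Q s) /\ (forall k, C k).
Proof.
by split; [|split]; [exact: term_nested_ind | exact: elim_nested_ind | exact: cont_nested_ind].
Qed.
End SyntaxInduction.

(* Structural induction over values; closures only contain syntax besides
   their environment, so only the environment carries an induction hypothesis. *)
Section ValueInduction.
Variable B : Type.
Variable P : value B -> Prop.
Hypotheses
  (hTrue : forall a, P (VTrue a))
  (hFalse : forall a, P (VFalse a))
  (hInt : forall n a, P (VInt n a))
  (hNil : forall a, P (VNil a))
  (hCons : forall a v1 v2, P v1 -> P v2 -> P (VCons a v1 v2))
  (hRec : forall a fs, allf P fs -> P (VRec a fs))
  (hClos : forall r h s, allf P r -> P (VClos r h s)).

Fixpoint value_nested_ind (v : value B) : P v :=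
  match v with
  | VTrue a => hTrue a
  | VFalse a => hFalse a
  | VInt n a => hInt n a
  | VNil a => hNil a
  | VCons a v1 v2 => hCons a v1 v2 (value_nested_ind v1) (value_nested_ind v2)
  | VRec a fs => hRec a fs (allf_of value_nested_ind fs)
  | VClos r h s => hClos r h s (allf_of value_nested_ind r)
  end.
End ValueInduction.

Section Fields.
Context {T U : Type}.

Lemma map_fieldsK (f : T -> U) (g : U -> T) fs :
  allf (fun e => g (f e) = e) fs -> map_fields g (map_fields f fs) = fs.
Proof. by elim: fs => [|[x e] fs IH] //= [-> /IH]; rewrite /map_fields => ->. Qed.

Context {R : T -> T -> Prop}.

Lemma rel_fields_refl fs : allf (fun e => R e e) fs -> rel_fields R fs fs.
Proof. by elim: fs => [|[x e] fs IH] //= [? /IH]. Qed.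

Lemma rel_fields_trans fs1 :
  allf (fun e1 => forall e2 e3, R e1 e2 -> R e2 e3 -> R e1 e3) fs1 ->
  forall fs2 fs3, rel_fields R fs1 fs2 -> rel_fields R fs2 fs3 -> rel_fields R fs1 fs3.
Proof.
elim: fs1 => [|[x e1] fs1 IH] /=; first by move=> _ [|??] [|??].
case=> tr1 /IH {}IH [|[y e2] fs2] [|[z e3] fs3] //= [<- [R12 fs12]] [<- [R23 fs23]].
by split; [|split; [exact: tr1 R12 R23 | exact: IH fs12 fs23]].
Qed.

Lemma rel_fields_roundtrip (f : T -> U) (g : U -> T) fs :
  allf (fun e => R (g (f e)) e) fs -> rel_fields R (map_fields g (map_fields f fs)) fs.
Proof. by elim: fs => [|[x e] fs IH] //= [? /IH]. Qed.

Lemma rel_fields_cat {fs1 fs1' fs2 fs2'} :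
  rel_fields R fs1 fs1' -> rel_fields R fs2 fs2' ->
  rel_fields R (fs1 ++ fs2) (fs1' ++ fs2').
Proof.
elim: fs1 fs1' => [|[x e] fs1 IH] [|[y e'] fs1'] //= [-> [Re fs11]] fs22.
by split; [|split; [|exact: IH]].
Qed.

Lemma rel_fields_take n {fs fs'} :
  rel_fields R fs fs' -> rel_fields R (take n fs) (take n fs').
Proof.
elim: fs fs' n => [|[x e] fs IH] [|[y e'] fs'] [|n] //= [-> [Re fs12]].
by split; [|split; [|exact: IH]].
Qed.

Lemma rel_fields_drop n {fs fs'} :
  rel_fields R fs fs' -> rel_fields R (drop n fs) (drop n fs').
Proof.
elim: fs fs' n => [|[x e] fs IH] [|[y e'] fs'] [|n] //= [_ [_ fs12]].
exact: IH.
Qed.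

Lemma rel_fields_rcons {fs fs'} x {e e'} :
  rel_fields R fs fs' -> R e e' -> rel_fields R (rcons fs (x, e)) (rcons fs' (x, e')).
Proof. by move=> fs12 Re; rewrite -!cats1; apply: rel_fields_cat. Qed.

Lemma rel_fields_rcons_inv {fs fs' x e x' e'} :
  rel_fields R (rcons fs (x, e)) (rcons fs' (x', e')) -> rel_fields R fs fs' /\ R e e'.
Proof.
elim: fs fs' => [|[y f] fs IH] [|[y' f'] fs'] /=.
- by case=> _ [].
- by case: fs' => [|[??]?] [_ [_ []]].
- by case: fs {IH} => [|[??]?] [_ [_ []]].
- by case=> -> [Rf /IH [fs12 Re]].
Qed.
End Fields.

Section SyntaxLemmas.
Context {B B' : Type}.

Lemma map_syntaxK {f : B -> B'} {g : B' -> B} : cancel f g ->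
  (forall t, map_term g (map_term f t) = t) /\
  (forall s, map_elim g (map_elim f s) = s) /\
  (forall k, map_cont g (map_cont f k) = k).
Proof. by move=> fK; apply: syntax_ind => * /=; f_equal; auto using map_fieldsK. Qed.

Context {R : B -> B -> Prop}.

Lemma rel_syntax_refl : (forall a, R a a) ->
  (forall t, rel_term R t t) /\ (forall s, rel_elim R s s) /\ (forall k, rel_cont R k k).
Proof. by move=> Rrefl; apply: syntax_ind => * /=; auto using rel_fields_refl. Qed.

Lemma rel_syntax_roundtrip {f : B -> B'} {g : B' -> B} :
  (forall a, R (g (f a)) a) ->
  (forall t, rel_term R (map_term g (map_term f t)) t) /\
  (forall s, rel_elim R (map_elim g (map_elim f s)) s) /\
  (forall k, rel_cont R (map_cont g (map_cont f k)) k).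
Proof. by move=> Rfg; apply: syntax_ind => * /=; auto using rel_fields_roundtrip. Qed.

Lemma rel_syntax_trans : (forall a b c, R a b -> R b c -> R a c) ->
  (forall t1 t2 t3, rel_term R t1 t2 -> rel_term R t2 t3 -> rel_term R t1 t3) /\
  (forall s1 s2 s3, rel_elim R s1 s2 -> rel_elim R s2 s3 -> rel_elim R s1 s3) /\
  (forall k1 k2 k3, rel_cont R k1 k2 -> rel_cont R k2 k3 -> rel_cont R k1 k3).
Proof.
move=> Rtr; apply: syntax_ind; intros;
  match goal with
  | H : rel_term _ _ ?y, H' : rel_term _ ?y ?z |- _ => destruct y, z
  | H : rel_elim _ _ ?y, H' : rel_elim _ ?y ?z |- _ => destruct y, z
  | H : rel_cont _ _ ?y, H' : rel_cont _ ?y ?z |- _ => destruct y, z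
  end; simpl in *; try contradiction;
  intuition (subst; eauto using rel_fields_trans).
Qed.
End SyntaxLemmas.

Section ValueLemmas.
Context {B : Type} {R : B -> B -> Prop}.

Lemma rel_val_refl : (forall a, R a a) -> forall v, rel_val R v v.
Proof.
move=> Rrefl; have [_ [sR _]] := rel_syntax_refl Rrefl.
elim/value_nested_ind => * /=; auto using rel_fields_refl.
by split; [|split]; [apply: rel_fields_refl | apply: rel_fields_refl; apply: allf_of | ].
Qed.

Lemma rel_val_trans : (forall a b c, R a b -> R b c -> R a c) ->
  forall v1 v2 v3, rel_val R v1 v2 -> rel_val R v2 v3 -> rel_val R v1 v3.
Proof.
move=> Rtr; have [_ [sR _]] := rel_syntax_trans Rtr.
elim/value_nested_ind; intros;
  match goal with H : rel_val _ _ ?y, H' : rel_val _ ?y ?z |- _ => destruct y, z end;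
  simpl in *; try contradiction; intuition (subst; eauto using rel_fields_trans).
apply: rel_fields_trans; eauto; apply: allf_of; exact: sR.
Qed.
End ValueLemmas.

Section Selections.
Context {d : Order.disp_t} {A : tbLatticeType d}.
Implicit Types (a b : A) (v : value A) (s t : elim A) (k : cont A) (r : env A).

Lemma leA_refl a : leA a a. Proof. exact: lexx. Qed.
Lemma leA_trans a b (c : A) : leA a b -> leA b c -> leA a c. Proof. exact: le_trans. Qed.

Lemma le_val_refl v : le_val v v. Proof. exact: rel_val_refl leA_refl v. Qed.
Lemma le_elim_refl s : le_elim s s. Proof. exact: (rel_syntax_refl leA_refl).2.1. Qed.
Lemma le_cont_refl k : le_cont k k. Proof. exact: (rel_syntax_refl leA_refl).2.2. Qed.
Lemma le_env_refl r : le_env r r.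
Proof. by apply: rel_fields_refl; apply: allf_of; exact: le_val_refl. Qed.

Lemma le_val_trans v1 v2 v3 : le_val v1 v2 -> le_val v2 v3 -> le_val v1 v3.
Proof. exact: (rel_val_trans leA_trans). Qed.
Lemma le_elim_trans s1 s2 s3 : le_elim s1 s2 -> le_elim s2 s3 -> le_elim s1 s3.
Proof. exact: (rel_syntax_trans leA_trans).2.1. Qed.
Lemma le_cont_trans k1 k2 k3 : le_cont k1 k2 -> le_cont k2 k3 -> le_cont k1 k3.
Proof. exact: (rel_syntax_trans leA_trans).2.2. Qed.
Lemma le_env_trans r1 r2 r3 : le_env r1 r2 -> le_env r2 r3 -> le_env r1 r3.
Proof. by apply: rel_fields_trans; apply: allf_of => v; exact: le_val_trans. Qed.

Lemma le_out2_refl (x : value A * elim A) : le_out2 x x.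
Proof. by split; [exact: le_val_refl | exact: le_elim_refl]. Qed.

Lemma le_out3_refl (x : env A * cont A * A) : le_out3 x x.
Proof. by split; [exact: le_env_refl | exact: le_cont_refl | exact: lexx]. Qed.

Lemma le_out2_trans {x y z : value A * elim A} : le_out2 x y -> le_out2 y z -> le_out2 x z.
Proof.
case=> xy1 xy2 [yz1 yz2].
by split; [exact: le_val_trans yz1 | exact: le_elim_trans yz2].
Qed.

Lemma le_out3_trans {x y z : env A * cont A * A} : le_out3 x y -> le_out3 y z -> le_out3 x z.
Proof.
case=> xy1 xy2 xy3 [yz1 yz2 yz3].
by split; [exact: le_env_trans yz1 | exact: le_cont_trans yz2 | exact: le_trans yz3].
Qed.

Lemma meet3_le a b (c : A) :
  [/\ a `&` b `&` c <= a, a `&` b `&` c <= b & a `&` b `&` c <= c].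
Proof.
split; last exact: leIr.
- exact: le_trans (leIl _ _) (leIl _ _).
- exact: le_trans (leIl _ _) (leIr _ _).
Qed.

Lemma bot_fnK : cancel (@bot_fn _ A) erase_tt. Proof. by case. Qed.

Lemma sel_bot_cont kb : sel_cont (bot_cont kb : cont A) kb.
Proof. exact: (map_syntaxK bot_fnK).2.2. Qed.
Lemma sel_bot_elim sb : sel_elim (bot_elim sb : elim A) sb.
Proof. exact: (map_syntaxK bot_fnK).2.1. Qed.

Lemma le_bot_cont k kb : sel_cont k kb -> le_cont (bot_cont kb) k.
Proof. by move=> <-; apply: (rel_syntax_roundtrip (fun a => le0x a)).2.2. Qed.
Lemma le_bot_elim s sb : sel_elim s sb -> le_elim (bot_elim sb) s.
Proof. by move=> <-; apply: (rel_syntax_roundtrip (fun a => le0x a)).2.1. Qed.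

Lemma sel_val_true v : sel_val v (VTrue tt) -> exists a, v = VTrue a.
Proof. by case: v => //= a _; exists a. Qed.
Lemma sel_val_false v : sel_val v (VFalse tt) -> exists a, v = VFalse a.
Proof. by case: v => //= a _; exists a. Qed.
Lemma sel_val_nil v : sel_val v (VNil tt) -> exists a, v = VNil a.
Proof. by case: v => //= a _; exists a. Qed.

Lemma sel_val_cons v vb1 vb2 : sel_val v (VCons tt vb1 vb2) ->
  exists a v1 v2, [/\ v = VCons a v1 v2, sel_val v1 vb1 & sel_val v2 vb2].
Proof. by case: v => //= a v1 v2 [Hv1 Hv2]; exists a, v1, v2. Qed.

Lemma sel_val_rec v fs : sel_val v (VRec tt fs) ->
  exists a fsel, v = VRec a fsel /\ sel_env fsel fs.
Proof. by case: v => //= a fsel [Hf]; exists a, fsel. Qed.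

Lemma sel_val_recI a {fsel fs} : sel_env fsel fs -> sel_val (VRec a fsel) (VRec tt fs).
Proof. by move=> <-. Qed.

Lemma sel_elim_var s x kb : sel_elim s (EVar x kb) ->
  exists k, s = EVar x k /\ sel_cont k kb.
Proof. by case: s => //= y k [-> Hk]; exists k. Qed.

Lemma sel_elim_bool s kb1 kb2 : sel_elim s (EBool kb1 kb2) ->
  exists k1 k2, [/\ s = EBool k1 k2, sel_cont k1 kb1 & sel_cont k2 kb2].
Proof. by case: s => //= k1 k2 [Hk1 Hk2]; exists k1, k2. Qed.

Lemma sel_elim_rec s xs kb : sel_elim s (ERec xs kb) ->
  exists k, s = ERec xs k /\ sel_cont k kb.
Proof. by case: s => //= ys k [-> Hk]; exists k. Qed.

Lemma sel_elim_recI xs {k kb} : sel_cont k kb -> sel_elim (ERec xs k) (ERec xs kb).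
Proof. by move=> <-. Qed.

Lemma sel_elim_list s kb sb : sel_elim s (EList kb sb) ->
  exists k s', [/\ s = EList k s', sel_cont k kb & sel_elim s' sb].
Proof. by case: s => //= k s' [Hk Hs]; exists k, s'. Qed.

Lemma sel_cont_elim k tb : sel_cont k (CElim tb) -> exists t, k = CElim t /\ sel_elim t tb.
Proof. by case: k => //= t [Ht]; exists t. Qed.

Lemma sel_cont_elimI {t} {tb : elim unit} : sel_elim t tb -> sel_cont (CElim t) (CElim tb).
Proof. by move=> <-. Qed.

Lemma sel_env_size {r rb} : sel_env r rb -> size r = size rb.
Proof. by move=> <-; rewrite size_map. Qed.

Lemma sel_env_nil r : sel_env r [::] -> r = [::].
Proof. by case: r. Qed.

Lemma sel_env_single r x vb : sel_env r [:: (x, vb)] ->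
  exists v, r = [:: (x, v)] /\ sel_val v vb.
Proof. by case: r => [|[y v] [|??]] //= [-> Hv]; exists v. Qed.

Lemma sel_env_rcons r rb x vb : sel_env r (rcons rb (x, vb)) ->
  exists r' v, [/\ r = rcons r' (x, v), sel_env r' rb & sel_val v vb].
Proof.
case/lastP: r => [|r' [y v]] Hr; first by move/sel_env_size: Hr; rewrite size_rcons.
move: Hr; rewrite /sel_env /map_env /map_fields map_rcons => /rcons_inj [Hr' -> Hv].
by exists r', v.
Qed.

Lemma sel_val_rcons v fs x vb : sel_val v (VRec tt (rcons fs (x, vb))) ->
  exists a fsel u, [/\ v = VRec a (rcons fsel (x, u)), sel_env fsel fs & sel_val u vb].
Proof.
case/sel_val_rec=> a [fsel' [-> /sel_env_rcons [fsel [u [-> Sf Su]]]]].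
by exists a, fsel, u.
Qed.

Lemma sel_env_cat {r1 r2 rb1 rb2} :
  sel_env r1 rb1 -> sel_env r2 rb2 -> sel_env (r1 ++ r2) (rb1 ++ rb2).
Proof. by move=> <- <-; rewrite /sel_env /map_env /map_fields map_cat. Qed.

Lemma sel_env_split {r rb1 rb2} : sel_env r (rb1 ++ rb2) ->
  sel_env (take (size rb1) r) rb1 /\ sel_env (drop (size rb1) r) rb2.
Proof.
rewrite /sel_env /map_env /map_fields => Hr.
by rewrite map_take map_drop Hr take_size_cat // drop_size_cat.
Qed.

Lemma sel_env_rconsI {r rb} x {v vb} :
  sel_env r rb -> sel_val v vb -> sel_env (rcons r (x, v)) (rcons rb (x, vb)).
Proof. by move=> <- <-; rewrite /sel_env /map_env /map_fields map_rcons. Qed.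
End Selections.

Section GaloisConnection.
Context {d : Order.disp_t} {A : tbLatticeType d}.

Record galois_match {vb sb rb kb} (w : mderiv vb sb rb kb) : Prop := GaloisMatch {
  bwd_sel : forall (r : env A) (k : cont A) (a : A),
    sel_env r rb -> sel_cont k kb ->
    sel_val (bwd w r k a).1 vb /\ sel_elim (bwd w r k a).2 sb;
  fwd_sel : forall (v : value A) (s : elim A),
    sel_val v vb -> sel_elim s sb ->
    sel_env (fwd w v s).1.1 rb /\ sel_cont (fwd w v s).1.2 kb;
  bwd_mono : forall (r r' : env A) (k k' : cont A) (a a' : A),
    sel_env r rb -> sel_cont k kb -> sel_env r' rb -> sel_cont k' kb ->
    le_out3 (r, k, a) (r', k', a') -> le_out2 (bwd w r k a) (bwd w r' k' a');
  fwd_mono : forall (v v' : value A) (s s' : elim A),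
    sel_val v vb -> sel_elim s sb -> sel_val v' vb -> sel_elim s' sb ->
    le_out2 (v, s) (v', s') -> le_out3 (fwd w v s) (fwd w v' s');
  fwd_bwd : forall (r : env A) (k : cont A) (a : A),
    sel_env r rb -> sel_cont k kb ->
    le_out3 (r, k, a) (let '(v, s) := bwd w r k a in fwd w v s);
  bwd_fwd : forall (v : value A) (s : elim A),
    sel_val v vb -> sel_elim s sb ->
    le_out2 (let '(r, k, a) := fwd w v s in bwd w r k a) (v, s)
}.

Arguments bwd_sel {vb sb rb kb w} _ {r k} a.
Arguments fwd_sel {vb sb rb kb w} _ {v s}.
Arguments bwd_mono {vb sb rb kb w} _ {r r' k k' a a'}.
Arguments fwd_mono {vb sb rb kb w} _ {v v' s s'}.
Arguments fwd_bwd {vb sb rb kb w} _ {r k} a.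
Arguments bwd_fwd {vb sb rb kb w} _ {v s}.

(* Base rules.  Each of them consumes one annotation or binds one variable and
   leaves everything else untouched, so all six clauses are immediate. *)
Lemma galois_var x vb kb : galois_match (MVar x vb kb).
Proof.
split.
- by move=> r k a /sel_env_single [v [-> <-]] <-.
- by move=> v s <- /sel_elim_var [k [-> <-]].
- move=> r r' k k' a a' /sel_env_single [v [-> _]] _ /sel_env_single [v' [-> _]] _.
  by case=> /= [[_ [le_v _]] le_k _].
- move=> v v' s s' _ /sel_elim_var [k [-> _]] _ /sel_elim_var [k' [-> _]] /=.
  by case=> le_v [_ le_k]; split=> //=; rewrite /le_env /=.
- move=> r k a /sel_env_single [v [-> _]] _ /=.
  by split; [split; [|split; [exact: le_val_refl|]] | exact: le_cont_refl | exact: lex1].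
- move=> v s _ /sel_elim_var [k [-> _]] /=.
  by split; [exact: le_val_refl | split; [|exact: le_cont_refl]].
Qed.

Lemma galois_true kb1 kb2 : galois_match (MTrue kb1 kb2).
Proof.
split.
- by move=> r k a _ <-; rewrite /sel_elim /= sel_bot_cont.
- by move=> v s /sel_val_true [a ->] /sel_elim_bool [k1 [k2 [-> <- _]]].
- move=> r r' k k' a a' _ _ _ _ [_ le_k le_a].
  by split=> //; split=> //; exact: le_cont_refl.
- move=> v v' s s' /sel_val_true [a ->] /sel_elim_bool [k1 [k2 [-> _ _]]].
  by move=> /sel_val_true [a' ->] /sel_elim_bool [k1' [k2' [-> _ _]]] [le_a [le_k _]].
- by move=> r k a /sel_env_nil -> _; exact: le_out3_refl.
- move=> v s /sel_val_true [a ->] /sel_elim_bool [k1 [k2 [-> _ S2]]].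
  by split; [exact: lexx | split; [exact: le_cont_refl | exact: le_bot_cont]].
Qed.

Lemma galois_false kb1 kb2 : galois_match (MFalse kb1 kb2).
Proof.
split.
- by move=> r k a _ <-; rewrite /sel_elim /= sel_bot_cont.
- by move=> v s /sel_val_false [a ->] /sel_elim_bool [k1 [k2 [-> _ <-]]].
- move=> r r' k k' a a' _ _ _ _ [_ le_k le_a].
  by split=> //; split=> //; exact: le_cont_refl.
- move=> v v' s s' /sel_val_false [a ->] /sel_elim_bool [k1 [k2 [-> _ _]]].
  by move=> /sel_val_false [a' ->] /sel_elim_bool [k1' [k2' [-> _ _]]] [le_a [_ le_k]].
- by move=> r k a /sel_env_nil -> _; exact: le_out3_refl.
- move=> v s /sel_val_false [a ->] /sel_elim_bool [k1 [k2 [-> S1 _]]].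
  by split; [exact: lexx | split; [exact: le_bot_cont | exact: le_cont_refl]].
Qed.

Lemma galois_nil kb sb : galois_match (MNil kb sb).
Proof.
split.
- by move=> r k a _ <-; rewrite /sel_elim /= sel_bot_elim.
- by move=> v s /sel_val_nil [a ->] /sel_elim_list [k [s' [-> <- _]]].
- move=> r r' k k' a a' _ _ _ _ [_ le_k le_a].
  by split=> //; split=> //; exact: le_elim_refl.
- move=> v v' s s' /sel_val_nil [a ->] /sel_elim_list [k [t [-> _ _]]].
  by move=> /sel_val_nil [a' ->] /sel_elim_list [k' [t' [-> _ _]]] [le_a [le_k _]].
- by move=> r k a /sel_env_nil -> _; exact: le_out3_refl.
- move=> v s /sel_val_nil [a ->] /sel_elim_list [k [t [-> _ St]]].
  by split; [exact: lexx | split; [exact: le_cont_refl | exact: le_bot_elim]].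
Qed.

Lemma galois_unit kb : galois_match (MUnit kb).
Proof.
split.
- by move=> r k a _ <-.
- by move=> v s /sel_val_rec [a [fs [-> _]]] /sel_elim_rec [k [-> <-]].
- move=> r r' k k' a a' _ _ _ _ [_ le_k le_a].
  by split=> //; split.
- move=> v v' s s' /sel_val_rec [a [fs [-> _]]] /sel_elim_rec [k [-> _]].
  by move=> /sel_val_rec [a' [fs' [-> _]]] /sel_elim_rec [k' [-> _]] [[le_a _] [_ le_k]].
- by move=> r k a /sel_env_nil -> _; exact: le_out3_refl.
- move=> v s /sel_val_rec [a [fs [-> /sel_env_nil ->]]] /sel_elim_rec [k [-> _]].
  exact: le_out2_refl.
Qed.

Section Sequential.
Context {vb1 vb2 : value unit} {sb1 tb : elim unit} {rb1 rb2 : env unit} {kb : cont unit}.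
Context {w1 : mderiv vb1 sb1 rb1 (CElim tb)} {w2 : mderiv vb2 tb rb2 kb}.
Hypotheses (G1 : galois_match w1) (G2 : galois_match w2).

(* [a] is the annotation of the enclosing cons or record node. *)
Definition fwd_seq (a : A) (v1 v2 : value A) (s1 : elim A) : env A * cont A * A :=
  let '(r1, t, b) := fwd w1 v1 s1 in
  match t with
  | CElim tau => let '(r2, k, b') := fwd w2 v2 tau in (r1 ++ r2, k, a `&` b `&` b')
  | _ => (bot_env (rb1 ++ rb2), bot_cont kb, \bot)
  end.

Definition bwd_seq (r : env A) (k : cont A) (a : A) : value A * value A * elim A :=
  let '(v2, tau) := bwd w2 (drop (size rb1) r) k a in
  let '(v1, s1) := bwd w1 (take (size rb1) r) (CElim tau) a in (v1, v2, s1).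

Lemma sel_bwd_seq {r k a v1 v2 s1} :
  sel_env r (rb1 ++ rb2) -> sel_cont k kb -> bwd_seq r k a = (v1, v2, s1) ->
  [/\ sel_val v1 vb1, sel_val v2 vb2 & sel_elim s1 sb1].
Proof.
move=> /sel_env_split [Sr1 Sr2] Sk; rewrite /bwd_seq.
case E2: (bwd w2 _ _ _) => [u2 tau]; have := bwd_sel G2 a Sr2 Sk; rewrite E2 /= => -[Su2 Stau].
case E1: (bwd w1 _ _ _) => [u1 t1].
have := bwd_sel G1 a Sr1 (sel_cont_elimI Stau); rewrite E1 /= => -[Su1 St1].
by case=> <- <- <-.
Qed.

Lemma sel_fwd_seq {a v1 v2 s1} :
  sel_val v1 vb1 -> sel_val v2 vb2 -> sel_elim s1 sb1 ->
  sel_env (fwd_seq a v1 v2 s1).1.1 (rb1 ++ rb2) /\ sel_cont (fwd_seq a v1 v2 s1).1.2 kb.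
Proof.
move=> Sv1 Sv2 Ss1; rewrite /fwd_seq.
case E1: (fwd w1 v1 s1) => [[r1 t] b].
have := fwd_sel G1 Sv1 Ss1; rewrite E1 /= => -[Sr1 /sel_cont_elim [tau [-> Stau]]] /=.
case E2: (fwd w2 v2 tau) => [[r2 k] b']; have := fwd_sel G2 Sv2 Stau; rewrite E2 /= => -[Sr2 Sk].
by split; [exact: sel_env_cat|].
Qed.

Lemma mono_bwd_seq {r r' k k' a a' v1 v2 s1 v1' v2' s1'} :
  sel_env r (rb1 ++ rb2) -> sel_cont k kb -> sel_env r' (rb1 ++ rb2) -> sel_cont k' kb ->
  le_out3 (r, k, a) (r', k', a') ->
  bwd_seq r k a = (v1, v2, s1) -> bwd_seq r' k' a' = (v1', v2', s1') ->
  [/\ le_val v1 v1', le_val v2 v2' & le_elim s1 s1'].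
Proof.
move=> Sr Sk Sr' Sk' [le_r le_k le_a].
have [[Sr1 Sr2] [Sr1' Sr2']] := (sel_env_split Sr, sel_env_split Sr'); rewrite /bwd_seq.
have := bwd_mono G2 Sr2 Sk Sr2' Sk' (And3 (rel_fields_drop _ le_r) le_k le_a).
have := bwd_sel G2 a Sr2 Sk; have := bwd_sel G2 a' Sr2' Sk'.
case: (bwd w2 _ k a) => [u2 tau]; case: (bwd w2 _ k' a') => [u2' tau'] /=.
move=> [_ Stau'] [_ Stau] [le_u2 le_tau].
have := bwd_mono G1 Sr1 (sel_cont_elimI Stau) Sr1' (sel_cont_elimI Stau')
  (And3 (rel_fields_take _ le_r) le_tau le_a).
case: (bwd w1 _ _ a) => [u1 t1]; case: (bwd w1 _ _ a') => [u1' t1'] [le_u1 le_t1].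
by case=> <- <- <- [<- <- <-].
Qed.

Lemma mono_fwd_seq {a a' v1 v1' v2 v2' s1 s1'} :
  sel_val v1 vb1 -> sel_val v2 vb2 -> sel_elim s1 sb1 ->
  sel_val v1' vb1 -> sel_val v2' vb2 -> sel_elim s1' sb1 ->
  a <= a' -> le_val v1 v1' -> le_val v2 v2' -> le_elim s1 s1' ->
  le_out3 (fwd_seq a v1 v2 s1) (fwd_seq a' v1' v2' s1').
Proof.
move=> Sv1 Sv2 Ss1 Sv1' Sv2' Ss1' le_a le_v1 le_v2 le_s1; rewrite /fwd_seq.
have := fwd_mono G1 Sv1 Ss1 Sv1' Ss1' (conj le_v1 le_s1).
have := fwd_sel G1 Sv1 Ss1; have := fwd_sel G1 Sv1' Ss1'.
case: (fwd w1 v1 s1) => [[r1 t] b]; case: (fwd w1 v1' s1') => [[r1' t'] b'] /=.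
move=> [_ /sel_cont_elim [tau' [-> Stau']]] [_ /sel_cont_elim [tau [-> Stau]]].
move=> [le_r1 le_tau le_b] /=.
have := fwd_mono G2 Sv2 Stau Sv2' Stau' (conj le_v2 le_tau).
case: (fwd w2 v2 tau) => [[r2 k] c]; case: (fwd w2 v2' tau') => [[r2' k'] c'] [le_r2 le_k le_c].
by split; [exact: rel_fields_cat | | do 2?apply: leI2].
Qed.

(* Unit: running [bwd_seq] and then [fwd_seq] (even on a larger first value,
   as the record rule requires) gives back at least the input. *)
Lemma fwd_bwd_seq {r k a v1 v1' v2 s1} :
  sel_env r (rb1 ++ rb2) -> sel_cont k kb -> bwd_seq r k a = (v1, v2, s1) ->
  sel_val v1' vb1 -> le_val v1 v1' -> le_out3 (r, k, a) (fwd_seq a v1' v2 s1).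
Proof.
move=> Sr Sk; have [Sr1 Sr2] := sel_env_split Sr; rewrite /bwd_seq.
case E2: (bwd w2 _ _ _) => [u2 tau]; have := bwd_sel G2 a Sr2 Sk; rewrite E2 /= => -[Su2 Stau].
have unit2 := fwd_bwd G2 a Sr2 Sk; rewrite E2 in unit2.
case E1: (bwd w1 _ _ _) => [u1 t1].
have := bwd_sel G1 a Sr1 (sel_cont_elimI Stau); rewrite E1 /= => -[Su1 St1].
have unit1 := fwd_bwd G1 a Sr1 (sel_cont_elimI Stau); rewrite E1 in unit1.
case=> <- <- <- Sv1' le_v1; rewrite /fwd_seq.
have := le_out3_trans unit1 (fwd_mono G1 Su1 St1 Sv1' St1 (conj le_v1 (le_elim_refl _))).
have := fwd_sel G1 Sv1' St1.
case: (fwd w1 v1' t1) => [[r1 t] b] /= [_ /sel_cont_elim [tau' [-> Stau']]].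
move=> [le_r1 le_tau le_ab] /=.
have := le_out3_trans unit2 (fwd_mono G2 Su2 Stau Su2 Stau' (conj (le_val_refl _) le_tau)).
case: (fwd w2 u2 tau') => [[r2 k'] b'] [le_r2 le_k le_ab'].
split=> //=; first by rewrite -(cat_take_drop (size rb1) r); exact: rel_fields_cat.
by rewrite !lexI lexx le_ab le_ab'.
Qed.

Lemma bwd_fwd_seq {a v1 v2 s1 r k a' v1' v2' s1'} :
  sel_val v1 vb1 -> sel_val v2 vb2 -> sel_elim s1 sb1 ->
  fwd_seq a v1 v2 s1 = (r, k, a') -> bwd_seq r k a' = (v1', v2', s1') ->
  [/\ a' <= a, le_val v1' v1, le_val v2' v2 & le_elim s1' s1].
Proof.
move=> Sv1 Sv2 Ss1; rewrite /fwd_seq.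
case E1: (fwd w1 v1 s1) => [[r1 t] b].
have counit1 := bwd_fwd G1 Sv1 Ss1; rewrite E1 in counit1.
have := fwd_sel G1 Sv1 Ss1; rewrite E1 /= => -[Sr1 /sel_cont_elim [tau [Et Stau]]].
subst t => /=.
case E2: (fwd w2 v2 tau) => [[r2 k2] b']; have := fwd_sel G2 Sv2 Stau; rewrite E2 /= => -[Sr2 Sk2].
have counit2 := bwd_fwd G2 Sv2 Stau; rewrite E2 in counit2.
case=> <- <- <-; rewrite /bwd_seq -(sel_env_size Sr1) take_size_cat // drop_size_cat //.
set c := a `&` b `&` b'; have [le_ca le_cb le_cb'] := meet3_le a b b'.
have := le_out2_trans (bwd_mono G2 (a := c) (a' := b') Sr2 Sk2 Sr2 Sk2
  (And3 (le_env_refl _) (le_cont_refl _) le_cb')) counit2.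
have := bwd_sel G2 c Sr2 Sk2.
case: (bwd w2 r2 k2 _) => [u2 tau'] /= [_ Stau'] [le_u2 le_tau].
have := le_out2_trans (bwd_mono G1 (a := c) (a' := b)
  Sr1 (sel_cont_elimI Stau') Sr1 (sel_cont_elimI Stau)
  (And3 (le_env_refl _) le_tau le_cb)) counit1.
case: (bwd w1 r1 (CElim tau') _) => [u1 t1] [le_u1 le_t1].
by case=> <- <- <-.
Qed.
End Sequential.

Arguments fwd_seq {vb1 vb2 sb1 tb rb1 rb2 kb} w1 w2 a v1 v2 s1.
Arguments bwd_seq {vb1 vb2 sb1 tb rb1 rb2 kb} w1 w2 r k a.

Section ConsRule.
Context {vb1 vb2 : value unit} {sb1 tb : elim unit} {rb1 rb2 : env unit} {kb : cont unit}.
Context {w1 : mderiv vb1 sb1 rb1 (CElim tb)} {w2 : mderiv vb2 tb rb2 kb}.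
Variable kb0 : cont unit.

Lemma fwd_cons a v1 v2 k s1 :
  fwd (MCons kb0 w1 w2) (VCons a v1 v2) (EList k s1) = fwd_seq w1 w2 a v1 v2 s1.
Proof. by []. Qed.

Lemma bwd_cons {r k a v1 v2 s1} : bwd_seq w1 w2 r k a = (v1, v2, s1) ->
  bwd (MCons kb0 w1 w2) r k a = (VCons a v1 v2, EList (bot_cont kb0) s1).
Proof.
rewrite /bwd_seq /=; case: (bwd w2 _ _ _) => u2 tau; case: (bwd w1 _ _ _) => u1 t1.
by case=> <- <- <-.
Qed.

Lemma galois_cons : galois_match w1 -> galois_match w2 -> galois_match (MCons kb0 w1 w2).
Proof.
move=> G1 G2; split.
- move=> r k a Sr Sk; case E: (bwd_seq w1 w2 r k a) => [[v1 v2] s1].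
  rewrite (bwd_cons E); case: (sel_bwd_seq G1 G2 Sr Sk E) => <- <- <-.
  by rewrite /sel_elim /= sel_bot_cont.
- move=> v s /sel_val_cons [a [v1 [v2 [-> Sv1 Sv2]]]] /sel_elim_list [k [s1 [-> _ Ss1]]].
  by rewrite fwd_cons; exact: sel_fwd_seq.
- move=> r r' k k' a a' Sr Sk Sr' Sk' le_in.
  case E: (bwd_seq w1 w2 r k a) => [[v1 v2] s1].
  case E': (bwd_seq w1 w2 r' k' a') => [[v1' v2'] s1'].
  have [le_v1 le_v2 le_s1] := mono_bwd_seq G1 G2 Sr Sk Sr' Sk' le_in E E'.
  case: le_in => _ _ le_a; rewrite (bwd_cons E) (bwd_cons E').
  by split; [split; [|split] | split; [exact: le_cont_refl|]].
- move=> v v' s s' /sel_val_cons [a [v1 [v2 [-> Sv1 Sv2]]]] /sel_elim_list [k [s1 [-> _ Ss1]]].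
  move=> /sel_val_cons [a' [v1' [v2' [-> Sv1' Sv2']]]] /sel_elim_list [k' [s1' [-> _ Ss1']]].
  move=> [[le_a [le_v1 le_v2]] [_ le_s1]]; rewrite !fwd_cons.
  exact: mono_fwd_seq.
- move=> r k a Sr Sk; case E: (bwd_seq w1 w2 r k a) => [[v1 v2] s1].
  have [Sv1 _ _] := sel_bwd_seq G1 G2 Sr Sk E.
  rewrite (bwd_cons E); cbv beta iota; rewrite fwd_cons.
  exact: (fwd_bwd_seq G1 G2 Sr Sk E Sv1 (le_val_refl _)).
- move=> v s /sel_val_cons [a [v1 [v2 [-> Sv1 Sv2]]]] /sel_elim_list [k [s1 [-> Sk Ss1]]].
  rewrite fwd_cons; case E: (fwd_seq w1 w2 a v1 v2 s1) => [[r k'] a'].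
  case E': (bwd_seq w1 w2 r k' a') => [[v1' v2'] s1'].
  have [le_a le_v1 le_v2 le_s1] := bwd_fwd_seq G1 G2 Sv1 Sv2 Ss1 E E'.
  cbv beta iota; rewrite (bwd_cons E').
  by split; [split; [|split] | split; [exact: le_bot_cont|]].
Qed.
End ConsRule.

(* The record rule for [k+1] fields: sequential composition of the match of
   the first [k] fields, whose record annotation is reset to [\top] by [fwd]
   and discarded by [bwd], with the match of the last field. *)
Section RecordRule.
Context {fs : seq (var * value unit)} {vb : value unit} {kb0 : cont unit}.
Context {rb1 rb2 : env unit} {tb : elim unit} {kb : cont unit}.
Context {w1 : mderiv (VRec tt fs) (ERec (map fst fs) kb0) rb1 (CElim tb)}.
Context {w2 : mderiv vb tb rb2 kb}.
Variable x : var.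

Lemma fwd_rec a fsel y u ys k :
  fwd (MRec x w1 w2) (VRec a (rcons fsel (y, u))) (ERec ys k) =
  fwd_seq w1 w2 a (VRec \top fsel) u (ERec (map fst fs) k).
Proof. by rewrite /= rev_rcons /= revK. Qed.

Lemma bwd_rec {r k a b fsel u ys k0} :
  bwd_seq w1 w2 r k a = (VRec b fsel, u, ERec ys k0) ->
  bwd (MRec x w1 w2) r k a = (VRec a (rcons fsel (x, u)), ERec (rcons (map fst fs) x) k0).
Proof.
rewrite /bwd_seq /=; case: (bwd w2 _ _ _) => u' tau; case: (bwd w1 _ _ _) => v1 s1.
by case=> -> -> ->.
Qed.

Lemma bwd_seq_rec {r k a v1 u s1} :
  galois_match w1 -> galois_match w2 ->
  sel_env r (rb1 ++ rb2) -> sel_cont k kb -> bwd_seq w1 w2 r k a = (v1, u, s1) ->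
  exists b fsel k0, [/\ v1 = VRec b fsel, s1 = ERec (map fst fs) k0,
                        sel_env fsel fs, sel_val u vb & sel_cont k0 kb0].
Proof.
move=> G1 G2 Sr Sk E; have [/sel_val_rec [b [fsel [-> Sf]]] Su] := sel_bwd_seq G1 G2 Sr Sk E.
by case/sel_elim_rec=> k0 [-> Sk0]; exists b, fsel, k0.
Qed.

Lemma galois_rec : galois_match w1 -> galois_match w2 -> galois_match (MRec x w1 w2).
Proof.
move=> G1 G2; split.
- move=> r k a Sr Sk; case E: (bwd_seq w1 w2 r k a) => [[v1 u] s1].
  have [b [fsel [k0 [Ev1 Es1 Sf Su Sk0]]]] := bwd_seq_rec G1 G2 Sr Sk E.
  rewrite Ev1 Es1 in E; rewrite (bwd_rec E).
  by split; [apply: sel_val_recI; exact: sel_env_rconsI | exact: sel_elim_recI].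
- move=> v s /sel_val_rcons [a [fsel [u [-> Sf Su]]]] /sel_elim_rec [k [-> Sk]].
  rewrite fwd_rec; exact: (sel_fwd_seq G1 G2 (sel_val_recI \top Sf) Su (sel_elim_recI _ Sk)).
- move=> r r' k k' a a' Sr Sk Sr' Sk' le_in.
  case E: (bwd_seq w1 w2 r k a) => [[v1 u] s1].
  case E': (bwd_seq w1 w2 r' k' a') => [[v1' u'] s1'].
  have [le_v1 le_u le_s1] := mono_bwd_seq G1 G2 Sr Sk Sr' Sk' le_in E E'.
  have [b [fsel [k0 [Ev1 Es1 _ _ _]]]] := bwd_seq_rec G1 G2 Sr Sk E.
  have [b' [fsel' [k0' [Ev1' Es1' _ _ _]]]] := bwd_seq_rec G1 G2 Sr' Sk' E'.
  rewrite Ev1 Es1 in E le_v1 le_s1; rewrite Ev1' Es1' in E' le_v1 le_s1.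
  case: le_in le_v1 le_s1 => _ _ le_a [_ le_f] [_ le_k0].
  rewrite (bwd_rec E) (bwd_rec E').
  by split; [split; [|exact: rel_fields_rcons] | split].
- move=> v v' s s' /sel_val_rcons [a [fsel [u [-> Sf Su]]]] /sel_elim_rec [k [-> Sk]].
  move=> /sel_val_rcons [a' [fsel' [u' [-> Sf' Su']]]] /sel_elim_rec [k' [-> Sk']].
  move=> [[le_a /rel_fields_rcons_inv [le_f le_u]] [_ le_k]]; rewrite !fwd_rec.
  apply: (mono_fwd_seq G1 G2 (sel_val_recI _ Sf) Su (sel_elim_recI _ Sk)
    (sel_val_recI _ Sf') Su' (sel_elim_recI _ Sk') le_a) => //.
  by split; [exact: lexx|].
- move=> r k a Sr Sk; case E: (bwd_seq w1 w2 r k a) => [[v1 u] s1].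
  have [b [fsel [k0 [Ev1 Es1 Sf _ _]]]] := bwd_seq_rec G1 G2 Sr Sk E.
  rewrite Ev1 Es1 in E; rewrite (bwd_rec E); cbv beta iota; rewrite fwd_rec.
  apply: (fwd_bwd_seq G1 G2 Sr Sk E (sel_val_recI \top Sf)).
  exact: (conj (lex1 b) (le_env_refl fsel)).
- move=> v s /sel_val_rcons [a [fsel [u [-> Sf Su]]]] /sel_elim_rec [k [-> Sk]].
  rewrite fwd_rec; case E: (fwd_seq w1 w2 _ _ _ _) => [[r k'] a'].
  case E': (bwd_seq w1 w2 r k' a') => [[v1 u'] s1].
  have [le_a le_v1 le_u le_s1] :=
    bwd_fwd_seq G1 G2 (sel_val_recI \top Sf) Su (sel_elim_recI _ Sk) E E'.
  case: v1 E' le_v1 => // b fsel' E' [_ le_f].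
  case: s1 E' le_s1 => // ys k0 E' [_ le_k0].
  cbv beta iota; rewrite (bwd_rec E').
  by split; [split; [|exact: rel_fields_rcons] | split].
Qed.
End RecordRule.

Lemma galois_all {vb sb rb kb} (w : mderiv vb sb rb kb) : galois_match w.
Proof.
elim: w => *; [ exact: galois_var | exact: galois_true | exact: galois_false
              | exact: galois_nil | exact: galois_cons | exact: galois_unit
              | exact: galois_rec ].
Qed.
End GaloisConnection.

Theorem mainTheorem3 (d : Order.disp_t) (A : tbLatticeType d)
    (vb : value unit) (sb : elim unit) (rb : env unit) (kb : cont unit)
    (w : mderiv vb sb rb kb) :
  (* bwd_w : Sel(rho) x Sel(kappa) x A -> Sel(v) x Sel(sigma) *)
    (forall (r : env A) (k : cont A) (a : A),
        sel_env r rb -> sel_cont k kb ->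
        sel_val (bwd w r k a).1 vb /\ sel_elim (bwd w r k a).2 sb) /\
    (* fwd_w : Sel(v) x Sel(sigma) -> Sel(rho) x Sel(kappa) x A *)
    (forall (v : value A) (s : elim A),
        sel_val v vb -> sel_elim s sb ->
        sel_env (fwd w v s).1.1 rb /\ sel_cont (fwd w v s).1.2 kb) /\
    (* bwd_w monotone *)
    (forall (r r' : env A) (k k' : cont A) (a a' : A),
        sel_env r rb -> sel_cont k kb -> sel_env r' rb -> sel_cont k' kb ->
        le_out3 (r, k, a) (r', k', a') -> le_out2 (bwd w r k a) (bwd w r' k' a')) /\
    (* fwd_w monotone *)
    (forall (v v' : value A) (s s' : elim A),
        sel_val v vb -> sel_elim s sb -> sel_val v' vb -> sel_elim s' sb ->
        le_out2 (v, s) (v', s') -> le_out3 (fwd w v s) (fwd w v' s')) /\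
    (* fwd_w (bwd_w (rho, kappa, alpha)) >= (rho, kappa, alpha) *)
    (forall (r : env A) (k : cont A) (a : A),
        sel_env r rb -> sel_cont k kb ->
        le_out3 (r, k, a) (let '(v, s) := bwd w r k a in fwd w v s)) /\
    (* bwd_w (fwd_w (v, sigma)) <= (v, sigma) *)
    (forall (v : value A) (s : elim A),
        sel_val v vb -> sel_elim s sb ->
        le_out2 (let '(r, k, a) := fwd w v s in bwd w r k a) (v, s)).
Proof.
case: (galois_all (A := A) w) => sel_b sel_f mono_b mono_f unit counit.
exact: (conj sel_b (conj sel_f (conj mono_b (conj mono_f (conj unit counit))))).
Qed.
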